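(* Let $\Delta$ be a connected finite two-dimensional simplicial complex (triangulation) in $\mathbb{R}^2$ whose support is homotopy equivalent to a disk, let $r\ge 0$ and $k\ge r$ be integers, and let $f_1^0$ be the number of interior edges of $\Delta$. Let $\gamma_1,\dots,\gamma_{f_0^0}$ be an ordering of the interior vertices such that each pair of consecutive vertices $\gamma_i,\gamma_{i+1}$ are corners of a common triangle of $\Delta$. For each $i$ let $\tilde t_i$ be the number of distinct slopes among the edges joining $\gamma_i$ to a boundary vertex or to one of $\gamma_1,\dots,\gamma_{i-1}$; if $\tilde t_i>1$ put $\tilde\Omega_i=\lfloor \tilde t_i r/(\tilde t_i-1)\rfloor+1$, $\tilde a_i=\tilde t_i(r+1)+(1-\tilde t_i)\tilde\Omega_i$, $\tilde b_i=\tilde t_i-1-\tilde a_i$, and if $\tilde t_i\le 1$ put $\tilde a_i=\tilde b_i=\tilde\Omega_i=0$. Then \[\binom{k+2}{2}+f_1^0\binom{k+2-(r+1)}{2}-\sum_{i=1}^{f_0^0}\Big[\tilde t_i\binom{k+2-(r+1)}{2}-\tilde b_i\binom{k+2-\tilde\Omega_i}{2}-\tilde a_i\binom{k+2-(\tilde\Omega_i+1)}{2}\Big]\] \[=\binom{k+2}{2}+f_1^0\binom{k-r+1}{2}-f_0^0\Big[\binom{k+2}{2}-\binom{r+2}{2}\Big]+\sum_{i=1}^{f_0^0}\sum_{j=1}^{k-r}(r+j+1-j\,\tilde t_i)_+ ,\] i.e. the upper bound on $\dim C_k^r(\Delta)$ given by the first expression coincides with Schumaker's upper bound given by the second.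
   Context: An interior edge is an edge not contained in the boundary of the support; an interior vertex is a vertex not on the boundary. $C_k^r(\Delta)$ is the space of $C^r$ functions on the support that are polynomials of degree $\le k$ on each triangle. $(x)_+=\max(x,0)$; an empty sum is $0$. Binomial coefficients follow the convention $\binom{m}{2}=m(m-1)/2$ for integers $m\ge 2$ and $\binom{m}{2}=0$ for $m<2$. *)

From mathcomp Require Import all_boot all_order all_algebra.
From mathcomp Require Import all_classical all_reals all_analysis.
Import Order.TTheory GRing.Theory Num.Theory numFieldNormedType.Exports.

Set Implicit Arguments.
Unset Strict Implicit.
Unset Printing Implicit Defensive.

Local Open Scope classical_set_scope.
Local Open Scope ring_scope.

Definition binom2 (m : int) : int :=
  if (0 <= m)%R then ('C(`|m|%N, 2))%:Z else 0.

Definition pos_part (x : int) : int := Num.max x 0.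

Definition Omega_t (t r : nat) : nat := if (1 < t)%N then ((t * r) %/ (t - 1)).+1 else 0.
Definition a_t (t r : nat) : int :=
  if (1 < t)%N then (t * (r + 1))%:Z + (1 - t%:Z) * (Omega_t t r)%:Z else 0.
Definition b_t (t r : nat) : int :=
  if (1 < t)%N then t%:Z - 1 - a_t t r else 0.

Section Triangulation.
Variables (R : realType) (V : finType) (p : V -> R * R) (T : {set {set V}}).

Definition conv (s : {set V}) : set (R * R) :=
  [set x | exists w : V -> R,
     [/\ (forall v, 0 <= w v), (forall v, v \notin s -> w v = 0),
         \sum_v w v = 1,
         x.1 = \sum_v w v * (p v).1 & x.2 = \sum_v w v * (p v).2]].

Definition cross (a b c : R * R) : R :=
  (b.1 - a.1) * (c.2 - a.2) - (b.2 - a.2) * (c.1 - a.1).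

(* T is (the set of triangles of) a finite two-dimensional geometric
   simplicial complex in R^2 whose vertex set is V, embedded by p. *)
Definition is_planar_triangulation : Prop :=
  [/\ injective p /\ T != finset.set0,
      (forall s, s \in T -> #|s| = 3%N),
      (forall s u v w, s \in T -> u \in s -> v \in s -> w \in s ->
          u != v -> v != w -> u != w -> cross (p u) (p v) (p w) != 0),
      (forall s s', s \in T -> s' \in T -> conv s `&` conv s' = conv (s :&: s'))
    & (forall v, exists2 s, s \in T & v \in s)].

Definition tri_support : set (R * R) := [set x | exists2 s, s \in T & conv s x].

Definition bd_support : set (R * R) := closure tri_support `\` interior tri_support.

(* contractible = homotopy equivalent to a point (equivalently, to a disk) *)
Definition contractible (S : set (R * R)) : Prop :=
  exists x0, S x0 /\ exists H : R * (R * R) -> R * R,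
    [/\ ({within ((`[0%R, 1%R] : set R) `*` S), continuous H}),
        (forall s x, 0 <= s <= 1 -> S x -> S (H (s, x))),
        (forall x, S x -> H (0, x) = x)
      & (forall x, S x -> H (1, x) = x0)].

Definition is_edge (e : {set V}) : bool :=
  (#|e| == 2%N) && [exists s in T, e \subset s].

Definition interior_edge (e : {set V}) : bool :=
  is_edge e && ~~ `[< conv e `<=` bd_support >].

Definition n_interior_edges : nat := #|[set e | interior_edge e]|.

Definition boundary_vertex (v : V) : bool := `[< bd_support (p v) >].
Definition interior_vertex (v : V) : bool := ~~ boundary_vertex v.

(* slope of the segment from p u to p v (None = vertical) *)
Definition slope (u v : V) : option R :=
  let dx := (p v).1 - (p u).1 in
  if dx == 0 then None else Some (((p v).2 - (p u).2) / dx).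

(* gamma : 'I_n -> V an ordering of the interior vertices (0-based) *)
Definition ordering_ok (n : nat) (gamma : 'I_n -> V) : Prop :=
  [/\ injective gamma,
      (forall v, interior_vertex v = [exists j, gamma j == v])
    & (forall i j : 'I_n, j = i.+1 :> nat ->
         exists2 s, s \in T & (gamma i \in s) && (gamma j \in s))].

Definition t_tilde (n : nat) (gamma : 'I_n -> V) (i : 'I_n) : nat :=
  size (undup [seq slope (gamma i) w | w <- enum
    [set w | is_edge [set gamma i; w] &&
             (boundary_vertex w || [exists j : 'I_n, (j < i)%N && (gamma j == w)])]]).

End Triangulation.

(* Both bounds are sums of per-vertex contributions, and the identity holds
   vertex by vertex, for every value of t~.  Viewed as functions of k, the two contributions vanish at
   k = r, and by Pascal's rule binom2 (x + 1) = binom2 x + (x)_+ their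
   increments from k to k + 1 agree: writing Omega~ = r + q + 1 with
   q = r %/ (t~ - 1), the terms (j + r + 1 - Omega~)_+ and (j + r - Omega~)_+
   vanish exactly when j <= q, which is exactly when r + j + 1 - j t~ >= 0. *)
From mathcomp Require Import all_boot all_order all_algebra.
From mathcomp Require Import all_classical all_reals all_analysis.
From mathcomp Require Import zify ring.
Import Order.TTheory GRing.Theory Num.Theory numFieldNormedType.Exports.
Local Open Scope ring_scope.

Lemma pos_part_id (x : int) : 0 <= x -> pos_part x = x.
Proof. by move=> x_ge0; apply/max_idPl. Qed.

Lemma pos_part_eq0 (x : int) : x <= 0 -> pos_part x = 0.
Proof. by move=> x_le0; apply/max_idPr. Qed.

Lemma binom2_le1 (x : int) : x <= 1 -> binom2 x = 0.
Proof. by case: x => // m m_le1; rewrite /binom2 /= bin_small //; lia. Qed.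

Lemma binom2D1 (x : int) : binom2 (x + 1) = binom2 x + pos_part x.
Proof.
have [x_ge0 | x_lt0] := lerP 0 x; last first.
  by rewrite pos_part_eq0 ?ltW // !binom2_le1 //; lia.
rewrite pos_part_id //; case: x x_ge0 => // m _.
by rewrite -PoszD addn1 /binom2 /= binS bin1 PoszD addrC.
Qed.

Lemma Omega_tE (t r : nat) : (1 < t)%N -> Omega_t t r = (r + r %/ (t - 1)).+1.
Proof.
move=> t_gt1; rewrite /Omega_t t_gt1.
have -> : (t * r = r * (t - 1) + r)%N.
  by rewrite mulnBr muln1 mulnC subnK // leq_pmulr; lia.
by rewrite divnMDl //; lia.
Qed.

Lemma r_lt_Omega_t (t r : nat) : (1 < t)%N -> (r < Omega_t t r)%N.
Proof. by move=> t_gt1; rewrite Omega_tE // ltnS leq_addr. Qed.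

Lemma bound_increment_eq (t r : nat) (j : int) : 1 <= j ->
  t%:Z * j - b_t t r * pos_part (j + r%:Z + 1 - (Omega_t t r)%:Z)
    - a_t t r * pos_part (j + r%:Z - (Omega_t t r)%:Z)
  = r%:Z + j + 1 - pos_part (r%:Z + j + 1 - j * t%:Z).
Proof.
move=> j_ge1; rewrite /b_t /a_t; case: ltnP => t_gt1; last first.
  by rewrite !mul0r pos_part_id; [ring | nia].
rewrite Omega_tE //; set q := (r %/ (t - 1))%N.
have q_le : (q * (t - 1) <= r)%N by apply: leq_trunc_div.
have q_gt : (r < q.+1 * (t - 1))%N by apply: ltn_ceil; lia.
have [j_le_q | q_lt_j] := lerP j q%:Z.
- rewrite [pos_part (_ - j * _)]pos_part_id; last by nia.
  rewrite !pos_part_eq0; [ring | lia | lia].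
- rewrite [pos_part (_ - j * _)]pos_part_eq0; last by nia.
  rewrite !pos_part_id -?[(r + q).+1]addn1 ?PoszM ?PoszD; [ring | lia | lia].
Qed.

Lemma vertex_bound_eq (t r d : nat) :
  t%:Z * binom2 ((r + d)%N%:Z + 2 - (r%:Z + 1))
    - b_t t r * binom2 ((r + d)%N%:Z + 2 - (Omega_t t r)%:Z)
    - a_t t r * binom2 ((r + d)%N%:Z + 2 - ((Omega_t t r)%:Z + 1))
  = binom2 ((r + d)%N%:Z + 2) - binom2 (r%:Z + 2)
    - \sum_(1 <= j < d.+1) pos_part (r%:Z + j%:Z + 1 - j%:Z * t%:Z).
Proof.
elim: d => [|d IH].
  rewrite addn0 big_geq // binom2_le1; last by lia.
  have [t_gt1 | t_le1] := boolP (1 < t)%N; last first.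
    by rewrite /b_t /a_t (negbTE t_le1); ring.
  have Omega_gt := r_lt_Omega_t t r t_gt1.
  by rewrite ![binom2 (_ - _)]binom2_le1; [ring | lia | lia].
have shift c : (r + d.+1)%N%:Z + 2 - c = ((r + d)%N%:Z + 2 - c) + 1 by lia.
have shift0 : (r + d.+1)%N%:Z + 2 = ((r + d)%N%:Z + 2) + 1 by lia.
rewrite !shift shift0 !binom2D1 big_nat_recr //=.
move: IH (bound_increment_eq t r (d.+1)%:Z isT).
set S := \sum_(1 <= j < d.+1) _; set O := (Omega_t t r)%:Z.
have -> : (r + d)%N%:Z + 2 - (r%:Z + 1) = d.+1%:Z by lia.
have -> : (r + d)%N%:Z + 2 - O = d.+1%:Z + r%:Z + 1 - O by lia.
have -> : (r + d)%N%:Z + 2 - (O + 1) = d.+1%:Z + r%:Z - O by lia.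
by rewrite (pos_part_id (d.+1)%:Z) // (pos_part_id ((r + d)%N%:Z + 2)) // !mulrDr; lia.
Qed.

Theorem proposition4p6 (R : realType) (V : finType) (p : V -> R * R)
  (T : {set {set V}}) (r k : nat) (n : nat) (gamma : 'I_n -> V) :
  is_planar_triangulation p T ->
  connected (tri_support p T) ->
  contractible (tri_support p T) ->
  (r <= k)%N ->
  ordering_ok p T gamma ->
  let f10 : int := (n_interior_edges p T)%:Z in
  let f00 : int := n%:Z in
  let t i := t_tilde p T gamma i in
  binom2 (k%:Z + 2) + f10 * binom2 (k%:Z + 2 - (r%:Z + 1))
    - \sum_(i < n) ((t i)%:Z * binom2 (k%:Z + 2 - (r%:Z + 1))
                    - b_t (t i) r * binom2 (k%:Z + 2 - (Omega_t (t i) r)%:Z)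
                    - a_t (t i) r * binom2 (k%:Z + 2 - ((Omega_t (t i) r)%:Z + 1)))
  = binom2 (k%:Z + 2) + f10 * binom2 (k%:Z - r%:Z + 1)
    - f00 * (binom2 (k%:Z + 2) - binom2 (r%:Z + 2))
    + \sum_(i < n) \sum_(1 <= j < (k - r).+1)
        pos_part (r%:Z + j%:Z + 1 - j%:Z * (t i)%:Z).
Proof.
move=> _ _ _ r_le_k _ f10 f00 t.
have [d ->] : exists d, k = (r + d)%N by exists (k - r)%N; rewrite subnKC.
rewrite addKn (eq_bigr _ (fun i _ => vertex_bound_eq (t i) r d)).
rewrite sumrB sumr_const card_ord /f00.
have -> : (r + d)%N%:Z - r%:Z + 1 = (r + d)%N%:Z + 2 - (r%:Z + 1) by ring.
ring.
Qed.
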